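(* For every instance of OfflineKnapExp and every $Q\subseteq\mathcal{I}$: if $U_P(Q)\le p^*$ holds for every packing $P$, then there is a packing $P\subseteq Q\cup\mathcal{I}_T$ with $p(P)=p^*$. Consequently, $Q$ is feasible if and only if $\sum_{i\in P\cap Q}(U_i-p_i)\ge U_P-p^*$ for every packing $P$, where $U_P=\sum_{i\in P}U_i$.
   Context: An instance of OfflineKnapExp is $\mathcal{K}=(\mathcal{I},B,w,p,\mathcal{A})$ where $\mathcal{I}=\{1,\dots,n\}$ is a set of items, $B\in\mathbb{N}$ is the knapsack capacity, each item has a weight $w_i\in\mathbb{N}$ with $w_i\le B$, a profit $p_i\in\mathbb{R}_{\ge 0}$, and an uncertainty interval $I_i\in\mathcal{A}$ with $p_i\in I_i$; each $I_i$ is either an open interval $(L_i,U_i)$ or trivial, $I_i=\{p_i\}$ (in which case $L_i=U_i=p_i$). $\mathcal{I}_T$ denotes the set of trivial items. A packing is a set $P\subseteq\mathcal{I}$ with $\sum_{i\in P}w_i\le B$; $p(P)=\sum_{i\in P}p_i$, and $p^*$ is the maximum of $p(P)$ over all packings. For $Q\subseteq\mathcal{I}$ let $U_i(Q)=p_i$ if $i\in Q$ and $U_i(Q)=U_i$ otherwise, and $U_P(Q)=\sum_{i\in P}U_i(Q)$. A query set $Q\subseteq\mathcal{I}$ is feasible if (1) there is a packing $P\subseteq Q\cup\mathcal{I}_T$ with $p(P)=p^*$, and (2) $U_P(Q)\le p^*$ for every packing $P$. *)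

(* Items are 'I_n (item i+1 of the paper = ordinal i). *)
From mathcomp Require Import all_boot all_order all_algebra.
Set Implicit Arguments. Unset Strict Implicit. Unset Printing Implicit Defensive.
Import Order.TTheory GRing.Theory Num.Theory.
Local Open Scope ring_scope.

Record knap_instance (R : realFieldType) (n : nat) := KnapInstance {
  capB : nat;
  wt   : 'I_n -> nat;
  prof : 'I_n -> R;
  lowL : 'I_n -> R;
  upU  : 'I_n -> R;
  triv : 'I_n -> bool         (* true iff I_i is trivial, I_i = {p_i} *)
}.

Definition valid_instance (R : realFieldType) (n : nat) (K : knap_instance R n) : Prop :=
  forall i : 'I_n,
    (wt K i <= capB K)%N /\ 0 <= prof K i /\
    (if triv K i then lowL K i = prof K i /\ upU K i = prof K i
     else lowL K i < prof K i < upU K i).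

Section Defs.
Variables (R : realFieldType) (n : nat) (K : knap_instance R n).

Definition trivial_items : {set 'I_n} := [set i | triv K i].

Definition is_packing (P : {set 'I_n}) : bool := (\sum_(i in P) wt K i <= capB K)%N.

Definition profit (P : {set 'I_n}) : R := \sum_(i in P) prof K i.

(* p^* : maximum profit over all packings (the empty packing has profit 0
   and all profits are >= 0, so 0 is a safe neutral element). *)
Definition pstar : R := \big[Num.max/0]_(P : {set 'I_n} | is_packing P) profit P.

Definition UQ (Q : {set 'I_n}) (i : 'I_n) : R := if i \in Q then prof K i else upU K i.

Definition UPQ (Q P : {set 'I_n}) : R := \sum_(i in P) UQ Q i.

Definition UP (P : {set 'I_n}) : R := \sum_(i in P) upU K i.

Definition feasible_query (Q : {set 'I_n}) : Prop :=
  (exists P : {set 'I_n}, [/\ is_packing P, P \subset Q :|: trivial_items & profit P = pstar])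
  /\ (forall P : {set 'I_n}, is_packing P -> UPQ Q P <= pstar).

End Defs.

From mathcomp Require Import all_boot all_order all_algebra.
Set Implicit Arguments. Unset Strict Implicit. Unset Printing Implicit Defensive.
Import Order.TTheory GRing.Theory Num.Theory.
Local Open Scope ring_scope.

(* Take any packing P of profit p^*.  If it contained a non-trivial item i
   outside Q, then U_i(Q) = U_i > p_i while U_j(Q) >= p_j for every other j,
   so U_P(Q) > p(P) = p^*, contradicting the hypothesis.  The characterisation
   of feasibility follows because U_P(Q) = U_P - sum_(i in P :&: Q) (U_i - p_i). *)

Section OfflineKnapExp.
Variables (R : realFieldType) (n : nat) (K : knap_instance R n).

Lemma pstar_attained :
  exists2 P : {set 'I_n}, is_packing K P & profit K P = pstar K.
Proof.
pose attained x := exists2 P, is_packing K P & profit K P = x.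
have [/eqP ->|//] : pstar K == 0 \/ attained (pstar K).
  apply: (big_ind (fun x => x == 0 \/ attained x)); first by left.
    by move=> x y ? ?; case: leP.
  by move=> P packP; right; exists P.
by exists set0; rewrite /is_packing /profit !big_set0.
Qed.

Lemma UPQE (Q P : {set 'I_n}) :
  UPQ K Q P = UP K P - \sum_(i in P :&: Q) (upU K i - prof K i).
Proof.
have -> : \sum_(i in P :&: Q) (upU K i - prof K i) =
    \sum_(i in P) (if i \in Q then upU K i - prof K i else 0).
  by rewrite -big_mkcondr; apply: eq_bigl => i; rewrite in_setI.
rewrite /UPQ /UP -sumrB; apply: eq_bigr => i _; rewrite /UQ.
by case: (i \in Q); rewrite ?subr0 // opprB addrC subrK.
Qed.

Lemma UPQ_le_pstarE (Q P : {set 'I_n}) :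
  (UPQ K Q P <= pstar K) = (UP K P - pstar K <= \sum_(i in P :&: Q) (upU K i - prof K i)).
Proof. by rewrite UPQE lerBlDr -lerBlDl. Qed.

Hypothesis validK : valid_instance K.

Lemma prof_le_UQ (Q : {set 'I_n}) (i : 'I_n) : prof K i <= UQ K Q i.
Proof.
rewrite /UQ; case: ifP => // _; have [_ [_]] := validK i.
by case: (triv K i) => [[_ ->] //| /andP[_ /ltW]].
Qed.

Lemma prof_lt_UQ (Q : {set 'I_n}) (i : 'I_n) :
  i \notin Q -> ~~ triv K i -> prof K i < UQ K Q i.
Proof.
move=> iNQ iNT; rewrite /UQ (negbTE iNQ); have [_ [_]] := validK i.
by rewrite (negbTE iNT) => /andP[].
Qed.

Lemma profit_lt_UPQ (Q P : {set 'I_n}) (i : 'I_n) :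
  i \in P -> i \notin Q -> ~~ triv K i -> profit K P < UPQ K Q P.
Proof.
move=> iP iNQ iNT; rewrite /profit /UPQ (bigD1 i iP) [X in _ < X](bigD1 i iP) /=.
by rewrite ltr_leD ?prof_lt_UQ // ler_sum // => j _; apply: prof_le_UQ.
Qed.

Lemma optimal_packing_sub_queried (Q P : {set 'I_n}) :
  (forall P' : {set 'I_n}, is_packing K P' -> UPQ K Q P' <= pstar K) ->
  is_packing K P -> profit K P = pstar K -> P \subset Q :|: trivial_items K.
Proof.
move=> UPQ_le packP optP; apply/subsetP => i iP.
rewrite in_setU inE; apply/negPn/negP; rewrite negb_or => /andP[iNQ iNT].
by have := profit_lt_UPQ iP iNQ iNT; rewrite optP ltNge UPQ_le.
Qed.

End OfflineKnapExp.

Theorem mainTheorem6 (R : realFieldType) (n : nat) (K : knap_instance R n) :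
  valid_instance K ->
  (forall Q : {set 'I_n},
     (forall P : {set 'I_n}, is_packing K P -> UPQ K Q P <= pstar K) ->
     exists P : {set 'I_n},
       [/\ is_packing K P, P \subset Q :|: trivial_items K & profit K P = pstar K])
  /\
  (forall Q : {set 'I_n},
     feasible_query K Q <->
     (forall P : {set 'I_n}, is_packing K P ->
        UP K P - pstar K <= \sum_(i in P :&: Q) (upU K i - prof K i))).
Proof.
move=> validK.
have optimal_sub Q (UPQ_le : forall P, is_packing K P -> UPQ K Q P <= pstar K) :
    exists P, [/\ is_packing K P, P \subset Q :|: trivial_items K & profit K P = pstar K].
  have [P packP optP] := pstar_attained K.
  by exists P; split; rewrite ?(optimal_packing_sub_queried validK UPQ_le).
split=> // Q; split=> [[_ UPQ_le] P packP | slack_ge].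
  by rewrite -UPQ_le_pstarE UPQ_le.
have UPQ_le P : is_packing K P -> UPQ K Q P <= pstar K.
  by move=> packP; rewrite UPQ_le_pstarE slack_ge.
by split; [apply: optimal_sub | ].
Qed.
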